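(* Let $K$ be a field, $A=K[x_1,\dots,x_n]$, and $P=(x_1^{e_1},\dots,x_r^{e_r})$ for some $r\le n$ and integers $2\le e_1\le\cdots\le e_r$. Let $J\subset A$ be a strongly stable ideal and $I\subset A$ a monomial ideal containing $P+J$. Fix variables $a=x_i$, $b=x_k$ with $i<k$. Let $I'$ be the ideal of $A$ generated by all minimal monomial generators of $I$ other than $b^{e_b}$ (where $e_b=e_k$ if $k\le r$; if $k>r$, take $I'=I$). Let $T'$ be the $\{a,b\}$-compression of $I'$ and $T=T'+P$. Then $J\subset T$.
   Context: A monomial ideal $J$ is strongly stable if whenever $x_l m\in J$ for a monomial $m$, then $x_p m\in J$ for all $p<l$. For a monomial ideal $I$ and variables $a=x_i$, $b=x_k$ with $i<k$, write $I=\bigoplus_f fV_f$, where $f$ ranges over monomials in the variables other than $a,b$ and each $V_f$ is a monomial ideal of $K[a,b]$. The $\{a,b\}$-compression of $I$ is $\bigoplus_f fN_f$, where $N_f\subset K[a,b]$ is the lex ideal (with respect to $a>b$) having the same Hilbert function as $V_f$. A lex ideal is a monomial ideal whose degree-$d$ monomials form, for every $d$, an initial lexicographic segment of all degree-$d$ monomials. *)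

(* Monomial ideals of A = K[x_0,...,x_{n-1}] are represented by
   their sets of monomials (exponent vectors). *)
From mathcomp Require Import all_boot.
From mathcomp Require Import boolp.

Set Implicit Arguments.
Unset Strict Implicit.
Unset Printing Implicit Defensive.

Definition mon (n : nat) := 'I_n -> nat.

Definition dvdm n (m m' : mon n) : Prop := forall j, m j <= m' j.

Definition isMonIdeal n (I : mon n -> Prop) : Prop :=
  forall m m', I m -> dvdm m m' -> I m'.

Definition xpow n (l : 'I_n) (e : nat) : mon n := fun j => if j == l then e else 0.

Definition addvar n (m : mon n) (l : 'I_n) : mon n := fun j => m j + (j == l).

Definition stronglyStable n (J : mon n -> Prop) : Prop :=
  isMonIdeal J /\
  forall (m : mon n) (l p : 'I_n), p < l -> J (addvar m l) -> J (addvar m p).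

(* P = (x_0^{e 0}, ..., x_{r-1}^{e (r-1)})  (0-based indexing) *)
Definition Pideal n (r : nat) (e : nat -> nat) : mon n -> Prop :=
  fun m => exists j : 'I_n, j < r /\ e j <= m j.

Definition mingen n (I : mon n -> Prop) (g : mon n) : Prop :=
  I g /\ forall g', I g' -> dvdm g' g -> dvdm g g'.

Definition Iprime n (I : mon n -> Prop) (b : 'I_n) (r : nat) (e : nat -> nat)
  : mon n -> Prop :=
  if b < r then
    fun m => exists g : mon n,
      [/\ mingen I g, ~ (forall j, g j = xpow b (e b) j) & dvdm g m]
  else I.

(* the monomial f * a^p * b^q, where f ranges over monomials in the other variables
   (the a- and b-exponents of f are overridden) *)
Definition setab n (f : mon n) (a b : 'I_n) (p q : nat) : mon n :=
  fun j => if j == a then p else if j == b then q else f j.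

(* V_f, as a set of monomials a^p b^q of K[a,b] *)
Definition fiber n (I : mon n -> Prop) (a b : 'I_n) (f : mon n) : nat -> nat -> Prop :=
  fun p q => I (setab f a b p q).

(* lex ideal of K[a,b] (a > b): a monomial ideal whose degree-d monomials form
   an initial lex segment for every d *)
Definition isLex2 (N : nat -> nat -> Prop) : Prop :=
  (forall p q p' q', N p q -> p <= p' -> q <= q' -> N p' q') /\
  (forall p q p', N p q -> p <= p' -> p' <= p + q -> N p' (p + q - p')).

Definition hf2 (V : nat -> nat -> Prop) (d : nat) : nat :=
  count (fun j => `[< V j (d - j) >]) (iota 0 d.+1).

Definition isCompression n (a b : 'I_n) (I T : mon n -> Prop) : Prop :=
  forall f : mon n,
    isLex2 (fiber T a b f) /\
    forall d, hf2 (fiber T a b f) d = hf2 (fiber I a b f) d.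

(** Let m be a monomial of J outside P, and split m = f a^p b^q.  Strong stability
    moves m to all the monomials f a^(p+t) b^(q-t), t <= q, which lie in J, hence in I.
    Their b-degree is at most q < e_b, so they are not divisible by b^(e_b) and lie
    in I' as well: the fibre V_f of I' has at least q+1 monomials in degree p+q.
    The lex ideal N_f with the same Hilbert function therefore contains the q+1
    lex-largest monomials of that degree, among which is a^p b^q; so m lies in T'. *)

From mathcomp Require Import all_boot.
From mathcomp Require Import boolp.

Set Implicit Arguments.
Unset Strict Implicit.
Unset Printing Implicit Defensive.

Section Monomials.

Variable n : nat.
Implicit Types (m f g : mon n) (a b : 'I_n) (I J : mon n -> Prop).

Lemma setab_id m a b : setab m a b (m a) (m b) = m.
Proof.
apply: funext => j; rewrite /setab.
by case: eqP => [->|_] //; case: eqP => [->|_].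
Qed.

Lemma setab_b f a b p q : a != b -> setab f a b p q b = q.
Proof. by move=> ab; rewrite /setab eq_sym (negbTE ab) eqxx. Qed.

Lemma addvar_setab_a f a b p q : addvar (setab f a b p q) a = setab f a b p.+1 q.
Proof.
apply: funext => j; rewrite /addvar /setab.
by case: (eqVneq j a) => [_|_]; rewrite ?addn1 ?addn0.
Qed.

Lemma addvar_setab_b f a b p q :
  a != b -> addvar (setab f a b p q) b = setab f a b p q.+1.
Proof.
move=> ab; apply: funext => j; rewrite /addvar /setab.
case: (eqVneq j a) => [->|_]; first by rewrite (negbTE ab) addn0.
by case: (eqVneq j b) => [_|_]; rewrite ?addn1 ?addn0.
Qed.

Lemma stronglyStable_fiber_shift J a b f p q :
  stronglyStable J -> a < b -> fiber J a b f p q ->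
  forall t, t <= q -> fiber J a b f (p + t) (q - t).
Proof.
move=> [_ stableJ] ab Jpq; elim=> [|t IHt] tq; first by rewrite addn0 subn0.
have a_neq_b : a != b by rewrite neq_ltn ab.
have := IHt (ltnW tq); rewrite /fiber -(subnSK tq).
rewrite -addvar_setab_b // => /(stableJ _ _ _ ab).
by rewrite addvar_setab_a addnS.
Qed.

Lemma dvdm_trans g1 g2 g3 : dvdm g1 g2 -> dvdm g2 g3 -> dvdm g1 g3.
Proof. by move=> d12 d23 j; apply: leq_trans (d12 j) (d23 j). Qed.

Lemma dvdm_sum_leq g g' :
  dvdm g' g -> \sum_j g j <= \sum_j g' j -> dvdm g g'.
Proof.
move=> g'g sum_le j; rewrite leqNgt; apply/negP => gj_gt.
suff : \sum_i g' i < \sum_i g i by rewrite ltnNge sum_le.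
rewrite (bigD1 j) //= [X in _ < X](bigD1 j) //= -addSn.
by apply: leq_add gj_gt _; apply: leq_sum.
Qed.

(* A minimal generator is obtained as a divisor in I of least total degree. *)
Lemma exists_mingen I m : I m -> exists2 g, mingen I g & dvdm g m.
Proof.
move=> Im.
pose below N := `[< exists g, [/\ I g, dvdm g m & \sum_j g j = N] >].
have ex_below : exists N, below N.
  by exists (\sum_j m j); apply/asboolP; exists m; split.
case: (ex_minnP ex_below) => N /asboolP [g [Ig gm <-]] minN.
exists g => //; split => // g' Ig' g'g.
apply: (dvdm_sum_leq g'g) (minN _ _); apply/asboolP.
by exists g'; split => //; apply: dvdm_trans g'g gm.
Qed.

Lemma Iprime_of_lt I b (r : nat) (e : nat -> nat) m :
  I m -> (b < r -> m b < e b) -> Iprime I b r e m.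
Proof.
rewrite /Iprime; case: ifP => // br Im /(_ isT) mb_lt.
have [g gI gm] := exists_mingen Im.
exists g; split => // g_eq.
by move: (gm b); rewrite g_eq /xpow eqxx leqNgt mb_lt.
Qed.

End Monomials.

Section LexInTwoVariables.

Implicit Types (V N : nat -> nat -> Prop).

Lemma hf2_ge_tail V p q :
  (forall t, t <= q -> V (p + t) (q - t)) -> q < hf2 V (p + q).
Proof.
move=> Vtail; rewrite /hf2 -addnS iotaD count_cat add0n.
rewrite (@eq_in_count _ _ predT (iota p q.+1)) ?count_predT ?size_iota ?leq_addl //.
move=> j; rewrite mem_iota => /andP [pj]; rewrite -(subnKC pj) ltn_add2l ltnS => jq /=.
by apply/asboolP; rewrite subnDl; apply: Vtail.
Qed.

(* In degree p + q, a lex ideal missing a^p b^q misses all a^j b^(p+q-j), j <= p. *)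
Lemma isLex2_hf2 N p q : isLex2 N -> q < hf2 N (p + q) -> N p q.
Proof.
move=> [_ lexN] hf_gt; apply/asboolP; apply: contraTT hf_gt => /asboolP Npq.
have Nhead j : j <= p -> ~ N j (p + q - j).
  move=> jp Nj; apply: Npq.
  have jpq : j <= p + q := leq_trans jp (leq_addr q p).
  by move: (lexN _ _ p Nj jp); rewrite subnKC // addKn leq_addr; apply.
rewrite -leqNgt /hf2 -addSn iotaD count_cat add0n.
rewrite (@eq_in_count _ _ pred0 (iota 0 p.+1)) ?count_pred0; last first.
  by move=> j; rewrite mem_iota => /andP [_ jp]; apply/asboolP/Nhead.
by rewrite add0n; apply: leq_trans (count_size _ _) _; rewrite size_iota.
Qed.

End LexInTwoVariables.

Theorem mainTheorem4 (n r : nat) (e : nat -> nat) (J I T' : mon n -> Prop)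
    (a b : 'I_n) :
  r <= n ->
  (forall j, j < r -> 2 <= e j) ->
  (forall j1 j2, j1 <= j2 -> j2 < r -> e j1 <= e j2) ->
  stronglyStable J ->
  isMonIdeal I ->
  (forall m, Pideal r e m \/ J m -> I m) ->
  a < b ->
  isCompression a b (Iprime I b r e) T' ->
  forall m : mon n, J m -> (T' m \/ Pideal r e m).
Proof.
move=> _ _ _ stableJ _ PJ_sub_I ab compT m Jm.
have [Pm|notPm] := asboolP (Pideal r e m); [by right | left].
have a_neq_b : a != b by rewrite neq_ltn ab.
have mb_lt : b < r -> m b < e b.
  by move=> br; rewrite ltnNge; apply/negP => le_mb; apply: notPm; exists b.
have [lexT' hfT'] := compT m.
rewrite -[m](setab_id m a b); apply: isLex2_hf2 lexT' _.
rewrite hfT'; apply: hf2_ge_tail => t tq.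
apply: Iprime_of_lt => [|br].
- apply: PJ_sub_I; right.
  have Jfib : fiber J a b m (m a) (m b) by rewrite /fiber setab_id.
  exact: stronglyStable_fiber_shift stableJ ab Jfib t tq.
- by rewrite setab_b //; apply: leq_ltn_trans (leq_subr _ _) (mb_lt br).
Qed.
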